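(* Let $(\mathcal{M},\phi,\xi,\eta,g)$ be a Riemannian $\Pi$-manifold of dimension $2n+1$. Then $\mathcal{M}$ belongs to the class $\mathcal{U}_1=\mathcal{F}_1\oplus\mathcal{F}_2\oplus\mathcal{F}_4\oplus\mathcal{F}_5\oplus\mathcal{F}_6\oplus\mathcal{F}_8\oplus\mathcal{F}_9\oplus\mathcal{F}_{10}\oplus\mathcal{F}_{11}$ if and only if $N(\phi x,\phi y)=0$ for all vector fields $x,y$ on $\mathcal{M}$.
   Context: A Riemannian $\Pi$-manifold $(\mathcal{M},\phi,\xi,\eta,g)$ is a $(2n+1)$-dimensional smooth manifold with a $(1,1)$-tensor field $\phi$, a vector field $\xi$, a 1-form $\eta$ and a Riemannian metric $g$ such that $\phi\xi=0$, $\phi^2=I-\eta\otimes\xi$, $\eta\circ\phi=0$, $\eta(\xi)=1$, $\operatorname{tr}\phi=0$, $g(\phi x,\phi y)=g(x,y)-\eta(x)\eta(y)$ (hence $g(\phi x,y)=g(x,\phi y)$, $g(x,\xi)=\eta(x)$). Let $\nabla$ be the Levi-Civita connection of $g$ and $F(x,y,z)=g((\nabla_x\phi)y,z)$. With respect to a basis $\{\xi,e_1,\dots,e_{2n}\}$ of $T_p\mathcal{M}$ and $(g^{ij})$ the inverse matrix of $(g_{ij})$, the Lee forms are $\theta=g^{ij}F(e_i,e_j,\cdot)$, $\theta^*=g^{ij}F(e_i,\phi e_j,\cdot)$, $\omega=F(\xi,\xi,\cdot)$. The basic classes $\mathcal{F}_1,\dots,\mathcal{F}_{11}$ are defined by the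 following conditions on $F$ (for all $x,y,z$): $\mathcal{F}_1$: $F(x,y,z)=\frac{1}{2n}\{g(\phi x,\phi y)\theta(\phi^2z)+g(\phi x,\phi z)\theta(\phi^2y)-g(x,\phi y)\theta(\phi z)-g(x,\phi z)\theta(\phi y)\}$; $\mathcal{F}_2$: $F(\xi,y,z)=0$, $F(x,\xi,z)=0$, $\theta=0$, $F(x,y,\phi z)+F(y,z,\phi x)+F(z,x,\phi y)=0$; $\mathcal{F}_3$: $F(\xi,y,z)=0$, $F(x,\xi,z)=0$, $F(x,y,z)+F(y,z,x)+F(z,x,y)=0$; $\mathcal{F}_4$: $F(x,y,z)=\frac{\theta(\xi)}{2n}\{g(\phi x,\phi y)\eta(z)+g(\phi x,\phi z)\eta(y)\}$; $\mathcal{F}_5$: $F(x,y,z)=\frac{\theta^*(\xi)}{2n}\{g(x,\phi y)\eta(z)+g(x,\phi z)\eta(y)\}$; $\mathcal{F}_6$: $F(x,y,z)=F(x,y,\xi)\eta(z)+F(x,z,\xi)\eta(y)$, $F(x,y,\xi)=F(y,x,\xi)=F(\phi x,\phi y,\xi)$; $\mathcal{F}_7$: same first condition, $F(x,y,\xi)=-F(y,x,\xi)=F(\phi x,\phi y,\xi)$; $\mathcal{F}_8$: same first condition, $F(x,y,\xi)=F(y,x,\xi)=-F(\phi x,\phi y,\xi)$; $\mathcal{F}_9$: same first condition, $F(x,y,\xi)=-F(y,x,\xi)=-F(\phi x,\phi y,\xi)$; $\mathcal{F}_{10}$: $F(x,y,z)=-\eta(x)F(\xi,\phi y,\phi z)$;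 $\mathcal{F}_{11}$: $F(x,y,z)=\eta(x)\{\eta(y)\omega(z)+\eta(z)\omega(y)\}$. At each point, the space of $(0,3)$-tensors with the symmetries of $F$ (namely $F(x,y,z)=F(x,z,y)=-F(x,\phi y,\phi z)+\eta(y)F(x,\xi,z)+\eta(z)F(x,y,\xi)$) is the orthogonal direct sum of the eleven subspaces given by these conditions; $\mathcal{M}$ belongs to a direct sum $\mathcal{F}_{i_1}\oplus\cdots\oplus\mathcal{F}_{i_k}$ if at every point $F$ lies in the sum of the corresponding subspaces. The Nijenhuis tensor is $N(x,y)=(\nabla_{\phi x}\phi)y-\phi(\nabla_x\phi)y-(\nabla_x\eta)(y)\xi-(\nabla_{\phi y}\phi)x+\phi(\nabla_y\phi)x+(\nabla_y\eta)(x)\xi$. *)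

From HB Require Import structures.
From mathcomp Require Import all_boot all_order all_algebra.
Set Implicit Arguments. Unset Strict Implicit. Unset Printing Implicit Defensive.
Import Order.TTheory GRing.Theory Num.Theory.
Local Open Scope ring_scope.

Section PiDefs.
Variable R : realFieldType.
Variable n : nat.

Definition pdim := n.*2.+1.
Notation V := 'cV[R]_pdim.

Definition ip (G : 'M[R]_pdim) (x y : V) : R := (x^T *m G *m y) 0 0.
Definition ev (eta : 'rV[R]_pdim) (x : V) : R := (eta *m x) 0 0.

Definition Pi_structure (G P : 'M[R]_pdim) (xi : V) (eta : 'rV[R]_pdim) : Prop :=
  G^T = G /\
  (forall v : V, v != 0 -> 0 < ip G v v) /\
  P *m xi = 0 /\
  P *m P = 1%:M - xi *m eta /\
  eta *m P = 0 /\
  ev eta xi = 1 /\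
  \tr P = 0 /\
  (forall x y : V, ip G (P *m x) (P *m y) = ip G x y - ev eta x * ev eta y).

(* First-order data of the Levi-Civita connection at p:
   nabla_x phi = \sum_i x_i Dphi i, nabla_x xi = Dxi x,
   (nabla_x eta)(y) = g(nabla_x xi, y)  (since eta = g(xi,.) and nabla g = 0). *)
Definition nphi (Dphi : 'I_pdim -> 'M[R]_pdim) (x : V) : 'M[R]_pdim :=
  \sum_i x i 0 *: Dphi i.
Definition nxi (Dxi : 'M[R]_pdim) (x : V) : V := Dxi *m x.
Definition neta (G Dxi : 'M[R]_pdim) (x y : V) : R := ip G (nxi Dxi x) y.

(* The identities obtained by covariantly differentiating the structure
   equations with a metric connection (nabla g = 0). *)
Definition LC_jet (G P : 'M[R]_pdim) (xi : V) (eta : 'rV[R]_pdim)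
    (Dphi : 'I_pdim -> 'M[R]_pdim) (Dxi : 'M[R]_pdim) : Prop :=
  forall x y z : V,
  nphi Dphi x *m xi + P *m nxi Dxi x = 0 /\
      nphi Dphi x *m (P *m y) + P *m (nphi Dphi x *m y)
        = - (neta G Dxi x y *: xi) - ev eta y *: nxi Dxi x /\
      ip G (nphi Dphi x *m y) (P *m z) + ip G (P *m y) (nphi Dphi x *m z)
        = - (neta G Dxi x y * ev eta z) - ev eta y * neta G Dxi x z /\
      ip G (nphi Dphi x *m y) z = ip G y (nphi Dphi x *m z) /\
      neta G Dxi x (P *m y) + ev eta (nphi Dphi x *m y) = 0 /\
      ip G (nxi Dxi x) xi = 0 /\
      \tr (nphi Dphi x) = 0.

Definition Ften G Dphi (x y z : V) : R := ip G (nphi Dphi x *m y) z.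

Definition Nij G P xi Dphi Dxi (x y : V) : V :=
  nphi Dphi (P *m x) *m y - P *m (nphi Dphi x *m y) - neta G Dxi x y *: xi
  - nphi Dphi (P *m y) *m x + P *m (nphi Dphi y *m x) + neta G Dxi y x *: xi.

Definition tensor3 := 'I_pdim -> 'I_pdim -> 'I_pdim -> R.
Definition ev3 (T : tensor3) (x y z : V) : R :=
  \sum_i \sum_j \sum_k T i j k * x i 0 * y j 0 * z k 0.

Definition e (i : 'I_pdim) : V := delta_mx i 0.

Section Classes.
Variables (G P : 'M[R]_pdim) (xi : V) (eta : 'rV[R]_pdim).
Let g := ip G.
Let ph (x : V) : V := P *m x.
Let et := ev eta.
Let inv2n : R := (n.*2)%:R^-1.

Definition theta (T : tensor3) (z : V) : R :=
  \sum_i \sum_j (invmx G) i j * ev3 T (e i) (e j) z.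
Definition theta_s (T : tensor3) (z : V) : R :=
  \sum_i \sum_j (invmx G) i j * ev3 T (e i) (ph (e j)) z.
Definition omega (T : tensor3) (z : V) : R := ev3 T xi xi z.

Definition Fsym (T : tensor3) : Prop := forall x y z : V,
  ev3 T x y z = ev3 T x z y /\
  ev3 T x y z = - ev3 T x (ph y) (ph z) + et y * ev3 T x xi z
                 + et z * ev3 T x y xi.

Definition cls1 T := Fsym T /\ forall x y z, ev3 T x y z = inv2n *
  (g (ph x) (ph y) * theta T (ph (ph z)) + g (ph x) (ph z) * theta T (ph (ph y))
   - g x (ph y) * theta T (ph z) - g x (ph z) * theta T (ph y)).
Definition cls2 T := Fsym T /\ forall x y z,
  [/\ ev3 T xi y z = 0, ev3 T x xi z = 0, theta T z = 0 &
      ev3 T x y (ph z) + ev3 T y z (ph x) + ev3 T z x (ph y) = 0].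
Definition cls3 T := Fsym T /\ forall x y z,
  [/\ ev3 T xi y z = 0, ev3 T x xi z = 0 &
      ev3 T x y z + ev3 T y z x + ev3 T z x y = 0].
Definition cls4 T := Fsym T /\ forall x y z, ev3 T x y z =
  theta T xi * inv2n * (g (ph x) (ph y) * et z + g (ph x) (ph z) * et y).
Definition cls5 T := Fsym T /\ forall x y z, ev3 T x y z =
  theta_s T xi * inv2n * (g x (ph y) * et z + g x (ph z) * et y).
Definition cls_vert T := forall x y z,
  ev3 T x y z = ev3 T x y xi * et z + ev3 T x z xi * et y.
Definition cls6 T := Fsym T /\ cls_vert T /\ forall x y,
  ev3 T x y xi = ev3 T y x xi /\ ev3 T x y xi = ev3 T (ph x) (ph y) xi.
Definition cls7 T := Fsym T /\ cls_vert T /\ forall x y,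
  ev3 T x y xi = - ev3 T y x xi /\ ev3 T x y xi = ev3 T (ph x) (ph y) xi.
Definition cls8 T := Fsym T /\ cls_vert T /\ forall x y,
  ev3 T x y xi = ev3 T y x xi /\ ev3 T x y xi = - ev3 T (ph x) (ph y) xi.
Definition cls9 T := Fsym T /\ cls_vert T /\ forall x y,
  ev3 T x y xi = - ev3 T y x xi /\ ev3 T x y xi = - ev3 T (ph x) (ph y) xi.
Definition cls10 T := Fsym T /\ forall x y z,
  ev3 T x y z = - (et x * ev3 T xi (ph y) (ph z)).
Definition cls11 T := Fsym T /\ forall x y z,
  ev3 T x y z = et x * (et y * omega T z + et z * omega T y).

Definition in_U1 (F : V -> V -> V -> R) : Prop :=
  exists T1 T2 T4 T5 T6 T8 T9 T10 T11 : tensor3,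
    cls1 T1 /\ cls2 T2 /\ cls4 T4 /\ cls5 T5 /\ cls6 T6 /\ cls8 T8 /\
    cls9 T9 /\ cls10 T10 /\ cls11 T11 /\
        (forall x y z, F x y z =
          ev3 T1 x y z + ev3 T2 x y z + ev3 T4 x y z + ev3 T5 x y z
          + ev3 T6 x y z + ev3 T8 x y z + ev3 T9 x y z + ev3 T10 x y z
          + ev3 T11 x y z).
End Classes.
End PiDefs.

(** A metric pairing turns [N(phi x, phi y)] into a fixed linear expression
    [nij_form F x y z] in the values of [F], and this expression vanishes on each of
    the classes [F1, F2, F4, F5, F6, F8, F9, F10, F11] by their defining identities.
    Conversely, expanding [x = phi^2 x + eta(x) xi] in every slot splits [F] into a
    horizontal part [F(phi^2 _, phi^2 _, phi^2 _)], a vertical part built from the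
    bilinear form [F(phi^2 _, phi^2 _, xi)], and parts with [xi] in the first slot,
    which are of class [F10] and [F11]. Sorting the vertical bilinear form by its
    behaviour under swapping and under [phi] gives [F6, F7, F8, F9] components, and
    [N = 0] kills the [F7] one. For the horizontal part [N = 0] forces the cyclic sum
    [F(x, y, phi z) + F(y, z, phi x) + F(z, x, phi y)] to vanish; removing its trace
    part, which is of class [F1] and built from the Lee form [theta], leaves a tensor of
    class [F2]. *)

From mathcomp Require Import all_boot all_order all_algebra.
From mathcomp Require Import ring lra.
Set Implicit Arguments. Unset Strict Implicit. Unset Printing Implicit Defensive.
Import Order.TTheory GRing.Theory Num.Theory.
Local Open Scope ring_scope.

Section PiManifold.
Variables (R : realFieldType) (n : nat).
Local Notation V := 'cV[R]_(pdim n).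
Implicit Types (x y z u v w : V) (a c : R) (f g : V -> V -> V -> R).
Implicit Types (A B b : V -> V -> R) (r : V -> R) (T : tensor3 R n).

(** * Multilinear forms *)

Definition bilinear_form (B : V -> V -> R) :=
  (forall y, scalar (B ^~ y)) /\ (forall x, scalar (B x)).
Definition trilinear_form (f : V -> V -> V -> R) :=
  [/\ forall y z, scalar (fun x => f x y z), forall x z, scalar (fun y => f x y z)
    & forall x y, scalar (f x y)].

Definition tensor_of (f : V -> V -> V -> R) : tensor3 R n :=
  fun i j k => f (e R i) (e R j) (e R k).

Lemma scalar0 (h : V -> R) : scalar h -> h 0 = 0.
Proof. by move=> hh; have := hh 1 0 0; rewrite scale1r addr0 mul1r; lra. Qed.

Lemma scalarD (h : V -> R) : scalar h -> {morph h : x y / x + y}.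
Proof. by move=> hh x y; have := hh 1 x y; rewrite scale1r mul1r. Qed.

Lemma scalarZ (h : V -> R) a x : scalar h -> h (a *: x) = a * h x.
Proof. by move=> hh; rewrite -[a *: x]addr0 hh (scalar0 hh) addr0. Qed.

Lemma col_sum_delta x : x = \sum_i x i 0 *: e R i.
Proof. by rewrite {1}(matrix_sum_delta x); apply: eq_bigr => i _; rewrite big_ord1. Qed.

Lemma scalar_coord (h : V -> R) x : scalar h -> h x = \sum_i x i 0 * h (e R i).
Proof.
move=> hh; rewrite {1}(col_sum_delta x) (big_morph h (scalarD hh) (scalar0 hh)).
by apply: eq_bigr => i _; rewrite scalarZ.
Qed.

Lemma ev3_tensor_of f : trilinear_form f -> forall x y z, ev3 (tensor_of f) x y z = f x y z.
Proof.
case=> h1 h2 h3 x y z; rewrite (scalar_coord x (h1 y z)) /ev3; apply: eq_bigr => i _.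
rewrite (scalar_coord y (h2 (e R i) z)) mulr_sumr; apply: eq_bigr => j _.
rewrite (scalar_coord z (h3 (e R i) (e R j))) !mulr_sumr; apply: eq_bigr => k _.
by rewrite /tensor_of; ring.
Qed.

Lemma ev3_trilinear (T : tensor3 R n) : trilinear_form (ev3 T).
Proof.
split=> [y z a u v|x z a u v|x y a u v]; rewrite /ev3 mulr_sumr -big_split;
  apply: eq_bigr => i _; rewrite mulr_sumr -big_split;
  apply: eq_bigr => j _; rewrite mulr_sumr -big_split;
  apply: eq_bigr => k _; rewrite /= !mxE; ring.
Qed.

Lemma trilinear_formB f g : trilinear_form f -> trilinear_form g ->
  trilinear_form (fun x y z => f x y z - g x y z).
Proof.
case=> f1 f2 f3 [g1 g2 g3].
by split=> [y z|x z|x y] a u v; rewrite ?f1 ?g1 ?f2 ?g2 ?f3 ?g3; ring.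
Qed.

Section Trilinear.
Variables (f : V -> V -> V -> R) (hf : trilinear_form f).

Lemma trilinP1 a x y u v : f (a *: x + y) u v = a * f x u v + f y u v.
Proof. by case: hf => h _ _; apply: h. Qed.
Lemma trilinP2 a x y u v : f u (a *: x + y) v = a * f u x v + f u y v.
Proof. by case: hf => _ h _; apply: (h u v). Qed.
Lemma trilinP3 a x y u v : f u v (a *: x + y) = a * f u v x + f u v y.
Proof. by case: hf => _ _ h; apply: (h u v). Qed.
Lemma trilin0_1 u v : f 0 u v = 0.
Proof. by case: hf => h _ _; apply: (scalar0 (h u v)). Qed.
Lemma trilin0_2 u v : f u 0 v = 0.
Proof. by case: hf => _ h _; apply: (scalar0 (h u v)). Qed.
Lemma trilin0_3 u v : f u v 0 = 0.
Proof. by case: hf => _ _ h; apply: (scalar0 (h u v)). Qed.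
End Trilinear.

Variables (G P : 'M[R]_(pdim n)) (xi : V) (eta : 'rV[R]_(pdim n)).

Lemma ip_linearPl a x y z : ip G (a *: x + y) z = a * ip G x z + ip G y z.
Proof. by rewrite /ip linearP /= !mulmxDl -!scalemxAl !mxE. Qed.
Lemma ip_linearPr a x y z : ip G z (a *: x + y) = a * ip G z x + ip G z y.
Proof. by rewrite /ip linearP !mxE. Qed.
Lemma ev_linearP a x y : ev eta (a *: x + y) = a * ev eta x + ev eta y.
Proof. by rewrite /ev linearP !mxE. Qed.

Lemma ipDl x y z : ip G (x + y) z = ip G x z + ip G y z.
Proof. by have := ip_linearPl 1 x y z; rewrite scale1r mul1r. Qed.
Lemma ip0l z : ip G 0 z = 0.
Proof. by rewrite /ip trmx0 !mul0mx mxE. Qed.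
Lemma ipZl a x z : ip G (a *: x) z = a * ip G x z.
Proof. by rewrite -[a *: x]addr0 ip_linearPl ip0l addr0. Qed.
Lemma ipNl x z : ip G (- x) z = - ip G x z.
Proof. by rewrite -scaleN1r ipZl mulN1r. Qed.
Lemma ip0r z : ip G z 0 = 0.
Proof. by rewrite /ip mulmx0 mxE. Qed.

Hypothesis hPi : Pi_structure G P xi eta.

Lemma ip_sym x y : ip G x y = ip G y x.
Proof.
case: hPi => G_sym _; have tr11 (A : 'M[R]_1) : A 0 0 = A^T 0 0 by rewrite mxE.
by rewrite /ip tr11 !trmx_mul trmxK G_sym mulmxA.
Qed.

Lemma P_xi : P *m xi = 0. Proof. by case: hPi => _ [_ []]. Qed.
Lemma ev_P x : ev eta (P *m x) = 0.
Proof. by case: hPi => _ [_ [_ [_ [etaP _]]]]; rewrite /ev mulmxA etaP mul0mx mxE. Qed.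
Lemma ev_xi : ev eta xi = 1.
Proof. by case: hPi => _ [_ [_ [_ [_ []]]]]. Qed.

Lemma P2E x : P *m (P *m x) = x - ev eta x *: xi.
Proof.
case: hPi => _ [_ [_ [P2 _]]].
by rewrite mulmxA P2 mulmxBl mul1mx -mulmxA [eta *m x]mx11_scalar mul_mx_scalar.
Qed.
Lemma vec_decomp x : x = P *m (P *m x) + ev eta x *: xi.
Proof. by rewrite P2E subrK. Qed.
Lemma P3E x : P *m (P *m (P *m x)) = P *m x.
Proof. by rewrite P2E ev_P scale0r subr0. Qed.

Lemma ip_PP x y : ip G (P *m x) (P *m y) = ip G x y - ev eta x * ev eta y.
Proof. by case: hPi => _ [_ [_ [_ [_ [_ [_ ]]]]]]. Qed.
Lemma ip_xir x : ip G x xi = ev eta x.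
Proof. by have := ip_PP x xi; rewrite P_xi ip0r ev_xi mulr1; lra. Qed.
Lemma ip_xil x : ip G xi x = ev eta x.
Proof. by rewrite ip_sym ip_xir. Qed.
Lemma ip_Pl x y : ip G (P *m x) y = ip G x (P *m y).
Proof.
have := ip_PP x (P *m y); rewrite ev_P mulr0 subr0 => <-.
by rewrite P2E -scaleNr addrC ip_linearPr ip_xir ev_P mulr0 add0r.
Qed.
Lemma ip_Pr x y : ip G y (P *m x) = ip G x (P *m y).
Proof. by rewrite ip_sym ip_Pl. Qed.
Lemma ip_P2r x y : ip G y (P *m (P *m x)) = ip G x (P *m (P *m y)).
Proof. by rewrite ip_Pr ip_Pl. Qed.

Lemma ip_nondeg v : (forall z, ip G v z = 0) -> v = 0.
Proof.
case: hPi => _ [ip_pos _] v0; apply/eqP; apply: contraTT isT => /ip_pos.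
by rewrite v0 ltxx.
Qed.

Lemma tr_P2 : \tr (P *m P) = (n.*2)%:R.
Proof.
case: hPi => _ [_ [_ [-> _]]]; rewrite mxtraceD mxtrace1 raddfN /= mxtrace_mulC.
by rewrite /mxtrace big_ord1 -[(eta *m xi) _ _]/(ev eta xi) ev_xi /pdim -natr1 addrK.
Qed.

Lemma tr_P : \tr P = 0.
Proof. by case: hPi => _ [_ [_ [_ [_ [_ []]]]]]. Qed.

Lemma G_unit : G \in unitmx.
Proof.
rewrite -row_free_unit; apply: inj_row_free => v vG0; apply: trmx_inj; rewrite trmx0.
by apply: ip_nondeg => z; rewrite /ip trmxK vG0 mul0mx mxE.
Qed.

Lemma invG_sym i j : invmx G i j = invmx G j i.
Proof.
case: hPi => G_sym _.
by have := congr1 (fun A : 'M[R]_(pdim n) => A j i) (trmx_inv G); rewrite mxE G_sym.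
Qed.

(** * Metric traces *)

Definition gtrace b : R := \sum_i \sum_j invmx G i j * b (e R i) (e R j).

Lemma theta_gtrace (T : tensor3 R n) z : theta G T z = gtrace (fun u v => ev3 T u v z).
Proof. by []. Qed.

Lemma eq_gtrace b1 b2 : (forall u v, b1 u v = b2 u v) -> gtrace b1 = gtrace b2.
Proof. by move=> eb; apply: eq_bigr => i _; apply: eq_bigr => j _; rewrite eb. Qed.

Lemma theta_tensor_of f z : trilinear_form f ->
  theta G (tensor_of f) z = gtrace (fun u v => f u v z).
Proof. by move=> hf; rewrite theta_gtrace; apply: eq_gtrace => u v; rewrite ev3_tensor_of. Qed.

Lemma gtraceD b1 b2 : gtrace (fun u v => b1 u v + b2 u v) = gtrace b1 + gtrace b2.
Proof. by rewrite -big_split; apply: eq_bigr => i _; rewrite -big_split; apply: eq_bigr => j _ /=; ring. Qed.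
Lemma gtraceN b : gtrace (fun u v => - b u v) = - gtrace b.
Proof. by rewrite -sumrN; apply: eq_bigr => i _; rewrite -sumrN; apply: eq_bigr => j _; ring. Qed.
Lemma gtraceMl c b : gtrace (fun u v => c * b u v) = c * gtrace b.
Proof. by rewrite mulr_sumr; apply: eq_bigr => i _; rewrite mulr_sumr; apply: eq_bigr => j _; ring. Qed.

Lemma theta_scalar (T : tensor3 R n) : scalar (theta G T).
Proof.
move=> a u v; rewrite !theta_gtrace -gtraceMl -gtraceD; apply: eq_gtrace => x y.
exact: (trilinP3 (ev3_trilinear T)).
Qed.

Lemma gtrace_ip (M : 'M[R]_(pdim n)) : gtrace (fun u v => ip G u (M *m v)) = \tr M.
Proof.
have -> : \tr M = \tr (G *m M *m invmx G).
  by rewrite mxtrace_mulC mulmxA (mulVmx G_unit) mul1mx.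
apply: eq_bigr => i _; rewrite mxE; apply: eq_bigr => j _.
rewrite invG_sym mulrC /ip /e trmx_delta !mulmxA -colE -mulmxA -rowE.
by rewrite !mxE.
Qed.

Lemma gtrace_ip_scalar w (h : V -> R) : scalar h ->
  gtrace (fun u v => ip G w u * h v) = h w.
Proof.
move=> hh; rewrite (scalar_coord w hh) /gtrace exchange_big /=.
have w_coord j : w j 0 = \sum_i invmx G i j * ip G w (e R i).
  have -> : w j 0 = (w^T *m G *m invmx G) 0 j.
    by rewrite -mulmxA (mulmxV G_unit) mulmx1 mxE.
  by rewrite mxE; apply: eq_bigr => i _; rewrite mulrC /ip /e -colE [in RHS]mxE.
apply: eq_bigr => j _; rewrite w_coord mulr_suml; apply: eq_bigr => i _; ring.
Qed.

(** * The Nijenhuis form and the classes of U1 *)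

(** [nij_form F x y z] is [g(N(phi x, phi y), z)] (lemma [ip_Nij_phi]). *)
Definition nij_form f x y z :=
  f (P *m (P *m x)) (P *m y) z - f (P *m x) (P *m y) (P *m z)
  + f (P *m x) (P *m (P *m y)) xi * ev eta z
  - f (P *m (P *m y)) (P *m x) z + f (P *m y) (P *m x) (P *m z)
  - f (P *m y) (P *m (P *m x)) xi * ev eta z.

Lemma eq_nij_form f1 f2 : (forall x y z, f1 x y z = f2 x y z) ->
  forall x y z, nij_form f1 x y z = nij_form f2 x y z.
Proof. by move=> ef x y z; rewrite /nij_form !ef. Qed.

Lemma nij_formD f1 f2 x y z : nij_form (fun u v w => f1 u v w + f2 u v w) x y z
  = nij_form f1 x y z + nij_form f2 x y z.
Proof. by rewrite /nij_form; ring. Qed.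

Definition f1_form r x y z := (n.*2)%:R^-1 *
  (ip G (P *m x) (P *m y) * r (P *m (P *m z)) + ip G (P *m x) (P *m z) * r (P *m (P *m y))
   - ip G x (P *m y) * r (P *m z) - ip G x (P *m z) * r (P *m y)).

Definition vert_form B x y z := B x y * ev eta z + B x z * ev eta y.

Lemma nij_form_f1 r : r 0 = 0 -> forall x y z, nij_form (f1_form r) x y z = 0.
Proof.
move=> r0 x y z; rewrite /nij_form /f1_form !ip_Pl !P3E P_xi !mulmx0 !ip0r r0.
by rewrite (ip_Pr x y) (ip_P2r x y); ring.
Qed.

Lemma nij_form_vert B x y z : nij_form (vert_form B) x y z = ev eta z *
  (B (P *m (P *m x)) (P *m y) + B (P *m x) (P *m (P *m y))
   - B (P *m (P *m y)) (P *m x) - B (P *m y) (P *m (P *m x))).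
Proof. by rewrite /nij_form /vert_form !ev_P ev_xi; ring. Qed.

Lemma nij_form_vert_sym_inv B : (forall x y, B x y = B y x) ->
  (forall x y, B x y = B (P *m x) (P *m y)) ->
  forall x y z, nij_form (vert_form B) x y z = 0.
Proof.
move=> Bsym Binv x y z; rewrite nij_form_vert.
rewrite (Binv (P *m (P *m x))) (Binv (P *m (P *m y))) !P3E.
by rewrite (Bsym (P *m y)) (Binv (P *m (P *m x))) P3E; ring.
Qed.

Lemma nij_form_vert_anti B : (forall x y, B x y = - B (P *m x) (P *m y)) ->
  forall x y z, nij_form (vert_form B) x y z = 0.
Proof.
move=> Banti x y z; rewrite nij_form_vert.
by rewrite (Banti (P *m (P *m x))) (Banti (P *m (P *m y))) !P3E; ring.
Qed.

Lemma nij_form_phi1_eq0 f : (forall u v w, f (P *m u) v w = 0) ->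
  forall x y z, nij_form f x y z = 0.
Proof. by move=> f0 x y z; rewrite /nij_form !f0; ring. Qed.

Definition cyclic_sum f x y z := f x y (P *m z) + f y z (P *m x) + f z x (P *m y).

Section Horizontal.
Variable f : V -> V -> V -> R.
Hypotheses (hf : trilinear_form f) (f_sym : forall x y z, f x y z = f x z y).
Hypothesis f_anti : forall x y z, f x (P *m y) (P *m z) = - f x y z.
Hypotheses (f_xi1 : forall u v, f xi u v = 0) (f_xi2 : forall u v, f u xi v = 0).

Lemma horiz_xi3 u v : f u v xi = 0. Proof. by rewrite f_sym f_xi2. Qed.

Lemma horiz_P2_1 x u v : f (P *m (P *m x)) u v = f x u v.
Proof. by rewrite P2E addrC -scaleNr trilinP1 // f_xi1 mulr0 add0r. Qed.
Lemma horiz_P2_2 x u v : f u (P *m (P *m x)) v = f u x v.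
Proof. by rewrite P2E addrC -scaleNr trilinP2 // f_xi2 mulr0 add0r. Qed.
Lemma horiz_P2_3 x u v : f u v (P *m (P *m x)) = f u v x.
Proof. by rewrite P2E addrC -scaleNr trilinP3 // horiz_xi3 mulr0 add0r. Qed.

Lemma nij_form_horizontal x y z :
  nij_form f x y z = - cyclic_sum f x y z - cyclic_sum f (P *m x) (P *m y) z.
Proof.
rewrite /nij_form /cyclic_sum !horiz_xi3 !mul0r !subr0 !addr0.
rewrite !horiz_P2_1 !horiz_P2_3.
have a1 := f_anti x y (P *m z); rewrite horiz_P2_3 in a1.
have a2 := f_anti z x (P *m y); rewrite horiz_P2_3 in a2.
have a3 := f_anti (P *m y) x z.
have s1 := f_sym y z (P *m x).
have s2 := f_sym (P *m y) z x.
lra.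
Qed.

(** The cyclic sum is cyclically invariant and changes sign under [phi] in two slots;
    going once around the cycle therefore flips its sign. *)
Lemma cyclic_sum_eq0 : (forall x y z, nij_form f x y z = 0) ->
  forall x y z, cyclic_sum f x y z = 0.
Proof.
move=> f_nij.
have C_rot u v w : cyclic_sum f u v w = cyclic_sum f v w u.
  by rewrite /cyclic_sum; ring.
have C_anti u v w : cyclic_sum f u v w = - cyclic_sum f (P *m u) (P *m v) w.
  by have := nij_form_horizontal u v w; rewrite f_nij; lra.
have C_P2 u v w : cyclic_sum f (P *m (P *m u)) v w = cyclic_sum f u v w.
  by rewrite /cyclic_sum horiz_P2_1 horiz_P2_2 P3E.
move=> x y z; suff : cyclic_sum f x y z = - cyclic_sum f x y z by lra.
rewrite {1}C_anti C_rot C_anti C_P2 C_rot C_anti C_P2 C_rot C_P2.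
by rewrite !opprK.
Qed.
End Horizontal.

Section Classes.
Variable T : tensor3 R n.

Lemma Fsym_anti : Fsym P xi eta T ->
  (forall x z, ev3 T x xi z = 0) -> forall x y z, ev3 T x (P *m y) (P *m z) = - ev3 T x y z.
Proof.
move=> TS Txi x y z; case: (TS x y z) => _ ->.
by rewrite Txi; case: (TS x y xi) => -> _; rewrite Txi !mulr0 !addr0 opprK.
Qed.

Lemma nij_form_cls1 : cls1 G P xi eta T -> forall x y z, nij_form (ev3 T) x y z = 0.
Proof.
case=> _ T1 x y z; rewrite (eq_nij_form T1) nij_form_f1 // theta_gtrace.
by apply: big1 => i _; apply: big1 => j _; rewrite (trilin0_3 (ev3_trilinear T)) mulr0.
Qed.

Lemma nij_form_cls2 : cls2 G P xi eta T -> forall x y z, nij_form (ev3 T) x y z = 0.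
Proof.
case=> TS T2 x y z.
have Txi1 u v : ev3 T xi u v = 0 by case: (T2 x u v).
have Txi2 u v : ev3 T u xi v = 0 by case: (T2 u x v).
have Tsym u v w : ev3 T u v w = ev3 T u w v by case: (TS u v w).
have Tcyc u v w : cyclic_sum (ev3 T) u v w = 0 by case: (T2 u v w).
rewrite (nij_form_horizontal (ev3_trilinear T) Tsym (Fsym_anti TS Txi2) Txi1 Txi2).
by rewrite !Tcyc oppr0 addr0.
Qed.

Lemma nij_form_cls4 : cls4 G P xi eta T -> forall x y z, nij_form (ev3 T) x y z = 0.
Proof.
case=> _ T4 x y z; set c := _ * _ in T4.
pose B u v := c * ip G (P *m u) (P *m v).
have TB u v w : ev3 T u v w = vert_form B u v w by rewrite T4 /vert_form /B; ring.
rewrite (eq_nij_form TB); apply: nij_form_vert_sym_inv => u v; rewrite /B.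
  by rewrite ip_sym.
by rewrite [in RHS]ip_Pl P3E.
Qed.

Lemma nij_form_cls5 : cls5 G P xi eta T -> forall x y z, nij_form (ev3 T) x y z = 0.
Proof.
case=> _ T5 x y z; set c := _ * _ in T5.
pose B u v := c * ip G u (P *m v).
have TB u v w : ev3 T u v w = vert_form B u v w by rewrite T5 /vert_form /B; ring.
rewrite (eq_nij_form TB); apply: nij_form_vert_sym_inv => u v; rewrite /B.
  by rewrite ip_Pr.
by rewrite ip_Pl P3E.
Qed.

Lemma nij_form_cls6 : cls6 P xi eta T -> forall x y z, nij_form (ev3 T) x y z = 0.
Proof.
case=> _ [Tvert T6] x y z; rewrite (eq_nij_form Tvert).
by apply: nij_form_vert_sym_inv => u v; case: (T6 u v).
Qed.

Lemma nij_form_cls8 : cls8 P xi eta T -> forall x y z, nij_form (ev3 T) x y z = 0.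
Proof.
case=> _ [Tvert T8] x y z; rewrite (eq_nij_form Tvert).
by apply: nij_form_vert_anti => u v; case: (T8 u v).
Qed.

Lemma nij_form_cls9 : cls9 P xi eta T -> forall x y z, nij_form (ev3 T) x y z = 0.
Proof.
case=> _ [Tvert T9] x y z; rewrite (eq_nij_form Tvert).
by apply: nij_form_vert_anti => u v; case: (T9 u v).
Qed.

Lemma nij_form_cls10 : cls10 P xi eta T -> forall x y z, nij_form (ev3 T) x y z = 0.
Proof.
case=> _ T10; apply: nij_form_phi1_eq0 => u v w.
by rewrite T10 ev_P mul0r oppr0.
Qed.

Lemma nij_form_cls11 : cls11 P xi eta T -> forall x y z, nij_form (ev3 T) x y z = 0.
Proof.
case=> _ T11; apply: nij_form_phi1_eq0 => u v w.
by rewrite T11 ev_P mul0r.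
Qed.
End Classes.

Lemma nij_form_U1 f : in_U1 G P xi eta f -> forall x y z, nij_form f x y z = 0.
Proof.
move=> [T1 [T2 [T4 [T5 [T6 [T8 [T9 [T10 [T11 [c1 [c2 [c4 [c5 [c6 [c8 [c9 [c10 [c11 fE]]]]]]]]]]]]]]]]]].
move=> x y z; rewrite (eq_nij_form fE).
rewrite !nij_formD.
rewrite nij_form_cls1 // nij_form_cls2 // nij_form_cls4 // nij_form_cls5 //.
rewrite nij_form_cls6 // nij_form_cls8 // nij_form_cls9 // nij_form_cls10 //.
by rewrite nij_form_cls11 // !addr0.
Qed.

Lemma scalar_mulmx (h : V -> R) (M : 'M[R]_(pdim n)) : scalar h -> scalar (fun v => h (M *m v)).
Proof. by move=> hh a u v; rewrite linearP hh. Qed.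

Lemma Fsym_tensor_of f : trilinear_form f -> (forall x y z, f x y z = f x z y) ->
  (forall x y z, f x y z = - f x (P *m y) (P *m z) + ev eta y * f x xi z + ev eta z * f x y xi) ->
  Fsym P xi eta (tensor_of f).
Proof. by move=> hf fsym fphi x y z; rewrite !(ev3_tensor_of hf). Qed.

Lemma Fsym_tensor_of_anti f : trilinear_form f -> (forall x y z, f x y z = f x z y) ->
  (forall x z, f x xi z = 0) -> (forall x y z, f x (P *m y) (P *m z) = - f x y z) ->
  Fsym P xi eta (tensor_of f).
Proof.
move=> hf fsym fxi fanti; apply: Fsym_tensor_of => // x y z.
by rewrite fanti (fsym x y xi) !fxi !mulr0 !addr0 opprK.
Qed.

Definition zero3 : tensor3 R n := fun _ _ _ => 0.

Lemma ev3_zero3 x y z : ev3 zero3 x y z = 0.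
Proof. by apply: big1 => i _; apply: big1 => j _; apply: big1 => k _; rewrite /zero3 !mul0r. Qed.

Lemma Fsym_zero3 : Fsym P xi eta zero3.
Proof. by move=> x y z; rewrite !ev3_zero3 !mulr0 oppr0 !addr0. Qed.

Lemma cls4_zero3 : cls4 G P xi eta zero3.
Proof.
split=> [|x y z]; first exact: Fsym_zero3.
have -> : theta G zero3 xi = 0.
  by apply: big1 => i _; apply: big1 => j _; rewrite ev3_zero3 mulr0.
by rewrite ev3_zero3 !mul0r.
Qed.

Lemma cls5_zero3 : cls5 G P xi eta zero3.
Proof.
split=> [|x y z]; first exact: Fsym_zero3.
have -> : theta_s G P zero3 xi = 0.
  by apply: big1 => i _; apply: big1 => j _; rewrite ev3_zero3 mulr0.
by rewrite ev3_zero3 !mul0r.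
Qed.

Hypothesis hn : (0 < n)%N.

Section F1Form.
Variable r : V -> R.
Hypothesis hr : scalar r.
Local Notation f1 := (f1_form r).

Lemma f1_form_trilinear : trilinear_form f1.
Proof.
by split=> [y z|x z|x y] a u v /=; rewrite /f1_form ?linearP ?ip_linearPl ?ip_linearPr ?hr; ring.
Qed.

Lemma f1_form_sym x y z : f1 x y z = f1 x z y.
Proof. by rewrite /f1_form; ring. Qed.
Lemma f1_form_xi1 y z : f1 xi y z = 0.
Proof. by rewrite /f1_form P_xi !ip0l !ip_xil !ev_P; ring. Qed.
Lemma f1_form_xi2 x z : f1 x xi z = 0.
Proof. by rewrite /f1_form P_xi mulmx0 !ip0r !(scalar0 hr); ring. Qed.
Lemma f1_form_anti x y z : f1 x (P *m y) (P *m z) = - f1 x y z.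
Proof. by rewrite /f1_form !ip_Pl !P3E; ring. Qed.

Lemma cyclic_sum_f1_form x y z : cyclic_sum f1 x y z = 0.
Proof.
rewrite /cyclic_sum /f1_form !ip_Pl !P3E.
rewrite ?(ip_Pr x y) ?(ip_Pr x z) ?(ip_Pr y z).
by rewrite ?(ip_P2r x y) ?(ip_P2r x z) ?(ip_P2r y z); ring.
Qed.

Lemma theta_f1_form w : theta G (tensor_of f1) w = r (P *m (P *m w)).
Proof.
rewrite (theta_tensor_of _ f1_form_trilinear).
have f1E u v : f1 u v w = (n.*2)%:R^-1 *
    (r (P *m (P *m w)) * ip G u ((P *m P) *m v) + ip G (P *m (P *m w)) u * r (P *m (P *m v))
     - r (P *m w) * ip G u (P *m v) - ip G (P *m w) u * r (P *m v)).
  rewrite /f1_form -mulmxA (ip_Pl u (P *m v)) (ip_Pl u (P *m w)).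
  by rewrite (ip_sym (P *m (P *m w)) u) (ip_sym (P *m w) u); ring.
rewrite (eq_gtrace f1E) gtraceMl !gtraceD !gtraceN !gtraceMl !gtrace_ip.
have hrP : scalar (fun v => r (P *m v)) := scalar_mulmx P hr.
have hrPP : scalar (fun v => r (P *m (P *m v))) := scalar_mulmx P hrP.
rewrite (gtrace_ip_scalar _ hrP) (gtrace_ip_scalar _ hrPP) tr_P2 P3E.
rewrite tr_P mulr0 subr0 addrK mulrCA mulVf ?mulr1 //.
by rewrite pnatr_eq0 double_eq0 -lt0n.
Qed.

Lemma cls1_f1_form : cls1 G P xi eta (tensor_of f1).
Proof.
split.
  exact: Fsym_tensor_of_anti f1_form_trilinear f1_form_sym f1_form_xi2 f1_form_anti.
by move=> x y z; rewrite !theta_f1_form !P3E (ev3_tensor_of f1_form_trilinear).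
Qed.
End F1Form.

Section VerticalForm.
Variable B : V -> V -> R.
Hypotheses (hB : bilinear_form B) (B_xi : forall x, B x xi = 0).
Local Notation fv := (vert_form B).

Lemma vert_form_trilinear : trilinear_form fv.
Proof.
case: hB => hB1 hB2.
by split=> [y z|x z|x y] a u v /=; rewrite /vert_form ?hB1 ?hB2 ?ev_linearP; ring.
Qed.

Lemma vert_form_classes : [/\ Fsym P xi eta (tensor_of fv),
  cls_vert xi eta (tensor_of fv) & forall x y, ev3 (tensor_of fv) x y xi = B x y].
Proof.
have fvE := ev3_tensor_of vert_form_trilinear.
have fv_xi x y : fv x y xi = B x y by rewrite /vert_form B_xi ev_xi; ring.
split=> [x y z|x y z|x y]; rewrite !fvE ?fv_xi //.
by rewrite /vert_form !ev_P ev_xi !B_xi; split; ring.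
Qed.
End VerticalForm.

Section SignParts.
Variable A : V -> V -> R.
Hypotheses (hA : bilinear_form A) (A_xi1 : forall x, A xi x = 0) (A_xi2 : forall x, A x xi = 0).
Hypothesis A_P2 : forall x y, A (P *m (P *m x)) (P *m (P *m y)) = A x y.

(** The component of [A] that is symmetric ([s = 1]) or skew ([s = -1]) and
    [phi]-invariant ([t = 1]) or [phi]-skew ([t = -1]). *)
Definition sign_part (s t : R) x y :=
  4%:R^-1 * (A x y + s * A y x + t * A (P *m x) (P *m y) + s * t * A (P *m y) (P *m x)).

Lemma sign_part_bilinear s t : bilinear_form (sign_part s t).
Proof.
case: hA => hA1 hA2.
by split=> [y|x] a u v; rewrite /sign_part ?linearP ?hA1 ?hA2; ring.
Qed.

Lemma sign_part_xi s t x : sign_part s t x xi = 0.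
Proof.
case: hA => hA1 hA2.
by rewrite /sign_part P_xi A_xi1 A_xi2 (scalar0 (hA1 _)) (scalar0 (hA2 _)); ring.
Qed.

Lemma sign_part_swap s t x y : s * s = 1 -> sign_part s t y x = s * sign_part s t x y.
Proof.
move=> ss; rewrite /sign_part mulrCA; congr (_ * _).
by rewrite !mulrDr !mulrA ss; ring.
Qed.

Lemma sign_part_phi s t x y : t * t = 1 ->
  sign_part s t (P *m x) (P *m y) = t * sign_part s t x y.
Proof.
move=> tt; rewrite /sign_part !A_P2 mulrCA; congr (_ * _).
by rewrite !mulrDr !mulrA [t * s]mulrC -[s * t * t]mulrA tt; ring.
Qed.

Lemma sum_sign_parts x y :
  A x y = sign_part 1 1 x y + sign_part (-1) 1 x y + sign_part 1 (-1) x y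
          + sign_part (-1) (-1) x y.
Proof. by rewrite /sign_part; field. Qed.
End SignParts.

(** * The Levi-Civita jet *)

Variables (Dphi : 'I_(pdim n) -> 'M[R]_(pdim n)) (Dxi : 'M[R]_(pdim n)).
Hypothesis hLC : LC_jet G P xi eta Dphi Dxi.
Local Notation F := (Ften G Dphi).

Lemma Ften_trilinear : trilinear_form F.
Proof.
have nphiP a x y : nphi Dphi (a *: x + y) = a *: nphi Dphi x + nphi Dphi y.
  rewrite /nphi scaler_sumr -big_split /=; apply: eq_bigr => i _.
  by rewrite !mxE scalerDl scalerA.
split=> [y z a u v|x z a u v|x y a u v]; rewrite /Ften.
- by rewrite nphiP mulmxDl -scalemxAl ip_linearPl.
- by rewrite linearP ip_linearPl.
- exact: ip_linearPr.
Qed.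

Lemma Ften_sym x y z : F x y z = F x z y.
Proof. by have [_ [_ [_ [nphi_sym _]]]] := hLC x y z; rewrite /Ften nphi_sym ip_sym. Qed.

Lemma neta_P x y : neta G Dxi x (P *m y) = - F x y xi.
Proof.
have [_ [_ [_ [_ [eq0 _]]]]] := hLC x y y.
by rewrite /Ften ip_xir; apply/eqP; rewrite -addr_eq0 eq0.
Qed.

Lemma neta_Ften x y : neta G Dxi x y = - F x (P *m y) xi.
Proof.
have [_ [_ [_ [_ [_ [Dxi_xi _]]]]]] := hLC x y y.
rewrite {1}(vec_decomp y) addrC /neta ip_linearPr Dxi_xi mulr0 add0r.
exact: neta_P.
Qed.

Lemma Ften_phi x y z :
  F x y z = - F x (P *m y) (P *m z) + ev eta y * F x xi z + ev eta z * F x y xi.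
Proof.
have [_ [_ [e3 _]]] := hLC x y (P *m z).
move: e3; rewrite -/(F x y (P *m (P *m z))) (ip_sym (P *m y)).
rewrite -/(F x (P *m z) (P *m y)) (Ften_sym x (P *m z)) ev_P neta_P.
rewrite (P2E z) [z - _]addrC -scaleNr (trilinP3 Ften_trilinear) (Ften_sym x z).
lra.
Qed.

Lemma Ften_P x y z : F x (P *m y) (P *m z) = - F x (P *m (P *m y)) (P *m (P *m z)).
Proof. by rewrite Ften_phi !ev_P !mul0r !addr0. Qed.

Lemma Ften_xi_xi x : F x xi xi = 0.
Proof.
have := Ften_phi x xi xi.
by rewrite P_xi (trilin0_2 Ften_trilinear) ev_xi !mul1r; lra.
Qed.

Lemma ip_Nij_phi x y z :
  ip G (Nij G P xi Dphi Dxi (P *m x) (P *m y)) z = nij_form F x y z.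
Proof.
rewrite /Nij !ipDl !ipNl !ipZl !ip_Pl ip_xil !neta_Ften.
by rewrite /nij_form /Ften; ring.
Qed.

(** * Decomposition of F *)

Section Decomposition.
Hypothesis hN : forall x y z, nij_form F x y z = 0.

Definition horiz_part x y z := F (P *m (P *m x)) (P *m (P *m y)) (P *m (P *m z)).
Definition vert_part x y := F (P *m (P *m x)) (P *m (P *m y)) xi.
Definition f10_part x y z := ev eta x * F xi (P *m (P *m y)) (P *m (P *m z)).
Definition f11_part x y z :=
  ev eta x * (ev eta y * F xi xi (P *m (P *m z)) + ev eta z * F xi xi (P *m (P *m y))).

Lemma Ften_decomp x y z :
  F x y z = horiz_part x y z + vert_form vert_part x y z + f10_part x y z + f11_part x y z.
Proof.
rewrite /horiz_part /vert_part /vert_form /f10_part /f11_part !P2E.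
rewrite -!scaleNr ![_ + _ *: xi]addrC !(trilinP1 Ften_trilinear) !(trilinP2 Ften_trilinear) !(trilinP3 Ften_trilinear).
by rewrite !(Ften_sym _ xi) !Ften_xi_xi; ring.
Qed.

Lemma horiz_part_trilinear : trilinear_form horiz_part.
Proof.
by split=> [y z|x z|x y] a u v; rewrite /horiz_part !linearP
  ?(trilinP1 Ften_trilinear) ?(trilinP2 Ften_trilinear) ?(trilinP3 Ften_trilinear).
Qed.
Lemma horiz_part_sym x y z : horiz_part x y z = horiz_part x z y.
Proof. exact: Ften_sym. Qed.
Lemma horiz_part_xi1 y z : horiz_part xi y z = 0.
Proof. by rewrite /horiz_part P_xi mulmx0 (trilin0_1 Ften_trilinear). Qed.
Lemma horiz_part_xi2 x z : horiz_part x xi z = 0.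
Proof. by rewrite /horiz_part P_xi mulmx0 (trilin0_2 Ften_trilinear). Qed.
Lemma horiz_part_anti x y z : horiz_part x (P *m y) (P *m z) = - horiz_part x y z.
Proof. by rewrite /horiz_part !P3E (Ften_P _ y). Qed.

Lemma nij_form_horiz_part x y z : nij_form horiz_part x y z = 0.
Proof.
rewrite -(hN x y (P *m (P *m z))) /nij_form /horiz_part !P3E P_xi mulmx0.
by rewrite !(trilin0_3 Ften_trilinear) !ev_P; ring.
Qed.

Local Notation theta_h := (theta G (tensor_of horiz_part)).
Definition f2_part x y z := horiz_part x y z - f1_form theta_h x y z.

Lemma f2_part_trilinear : trilinear_form f2_part.
Proof.
apply: trilinear_formB; first exact: horiz_part_trilinear.
exact/f1_form_trilinear/theta_scalar.
Qed.

Lemma theta_h_P2 z : theta_h (P *m (P *m z)) = theta_h z.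
Proof.
rewrite !(theta_tensor_of _ horiz_part_trilinear).
by apply: eq_gtrace => u v; rewrite /horiz_part P3E.
Qed.

Lemma cls2_f2_part : cls2 G P xi eta (tensor_of f2_part).
Proof.
have theta_hS := theta_scalar (tensor_of horiz_part).
have f2E := ev3_tensor_of f2_part_trilinear.
split=> [|x y z].
  apply: Fsym_tensor_of_anti f2_part_trilinear _ _ _ => [x y z|x z|x y z]; rewrite /f2_part.
  - by rewrite horiz_part_sym f1_form_sym.
  - by rewrite horiz_part_xi2 (f1_form_xi2 theta_hS) subrr.
  - by rewrite horiz_part_anti f1_form_anti; ring.
rewrite !f2E /f2_part horiz_part_xi1 horiz_part_xi2 f1_form_xi1 f1_form_xi2 //.
split; rewrite ?subrr //.
- rewrite theta_gtrace (eq_gtrace (fun u v => f2E u v z)) /f2_part.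
  rewrite gtraceD gtraceN -(theta_tensor_of z horiz_part_trilinear).
  rewrite -(theta_tensor_of z (f1_form_trilinear theta_hS)).
  by rewrite (theta_f1_form theta_hS) theta_h_P2 subrr.
- have := cyclic_sum_f1_form theta_h x y z.
  have := cyclic_sum_eq0 horiz_part_trilinear horiz_part_sym horiz_part_anti
    horiz_part_xi1 horiz_part_xi2 nij_form_horiz_part x y z.
  by rewrite /cyclic_sum /f2_part; lra.
Qed.

Lemma vert_part_bilinear : bilinear_form vert_part.
Proof.
by split=> [y|x] a u v; rewrite /vert_part !linearP
  ?(trilinP1 Ften_trilinear) ?(trilinP2 Ften_trilinear).
Qed.
Lemma vert_part_xi1 x : vert_part xi x = 0.
Proof. by rewrite /vert_part P_xi mulmx0 (trilin0_1 Ften_trilinear). Qed.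
Lemma vert_part_xi2 x : vert_part x xi = 0.
Proof. by rewrite /vert_part P_xi mulmx0 (trilin0_2 Ften_trilinear). Qed.
Lemma vert_part_P2 x y : vert_part (P *m (P *m x)) (P *m (P *m y)) = vert_part x y.
Proof. by rewrite /vert_part !P3E. Qed.

Local Notation vsign := (sign_part vert_part).

(** [vsign (-1) 1] is the [F7]-component of [F]; it is the [xi]-component of
    [N(phi x, phi^2 y)]. *)
Lemma F7_component_eq0 x y : vsign (-1) 1 x y = 0.
Proof.
have := hN x (P *m y) xi.
rewrite /nij_form /sign_part /vert_part !P3E P_xi !(trilin0_3 Ften_trilinear).
by rewrite ev_xi; lra.
Qed.

Lemma vert_sign_part_classes s t :
  [/\ Fsym P xi eta (tensor_of (vert_form (vsign s t))),
      cls_vert xi eta (tensor_of (vert_form (vsign s t)))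
    & forall x y, ev3 (tensor_of (vert_form (vsign s t))) x y xi = vsign s t x y].
Proof.
apply: vert_form_classes; first exact/sign_part_bilinear/vert_part_bilinear.
exact/(sign_part_xi vert_part_bilinear vert_part_xi1 vert_part_xi2).
Qed.

Let sq1 : 1 * 1 = 1 :> R. Proof. exact: mulr1. Qed.
Let sqN1 : -1 * -1 = 1 :> R. Proof. by rewrite mulrNN mulr1. Qed.

Lemma cls6_vert_part : cls6 P xi eta (tensor_of (vert_form (vsign 1 1))).
Proof.
have [TS Tv TB] := vert_sign_part_classes 1 1; split=> //; split=> // x y; rewrite !TB.
by split; [rewrite (sign_part_swap _ _ _ _ sq1)|rewrite (sign_part_phi vert_part_P2 _ _ _ sq1)];
  rewrite mul1r.
Qed.

Lemma cls8_vert_part : cls8 P xi eta (tensor_of (vert_form (vsign 1 (-1)))).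
Proof.
have [TS Tv TB] := vert_sign_part_classes 1 (-1); split=> //; split=> // x y; rewrite !TB.
split; first by rewrite (sign_part_swap _ _ _ _ sq1) mul1r.
by rewrite (sign_part_phi vert_part_P2 _ _ _ sqN1) mulN1r opprK.
Qed.

Lemma cls9_vert_part : cls9 P xi eta (tensor_of (vert_form (vsign (-1) (-1)))).
Proof.
have [TS Tv TB] := vert_sign_part_classes (-1) (-1); split=> //; split=> // x y; rewrite !TB.
split; first by rewrite (sign_part_swap _ _ _ _ sqN1) mulN1r.
by rewrite (sign_part_phi vert_part_P2 _ _ _ sqN1) mulN1r opprK.
Qed.

Lemma f10_part_trilinear : trilinear_form f10_part.
Proof.
by split=> [y z|x z|x y] a u v; rewrite /f10_part ?linearP ?ev_linearP
  ?(trilinP2 Ften_trilinear) ?(trilinP3 Ften_trilinear); ring.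
Qed.

Lemma cls10_f10_part : cls10 P xi eta (tensor_of f10_part).
Proof.
have T10 := ev3_tensor_of f10_part_trilinear.
have f10_part_P x y z : f10_part x (P *m y) (P *m z) = - f10_part x y z.
  by rewrite /f10_part !P3E (Ften_P xi y) mulrN.
split=> [|x y z].
  apply: Fsym_tensor_of_anti f10_part_trilinear _ _ f10_part_P => [x y z|x z].
    by rewrite /f10_part Ften_sym.
  by rewrite /f10_part P_xi mulmx0 (trilin0_2 Ften_trilinear) mulr0.
by rewrite !T10 f10_part_P /f10_part ev_xi mul1r mulrN opprK.
Qed.

Lemma f11_part_trilinear : trilinear_form f11_part.
Proof.
by split=> [y z|x z|x y] a u v; rewrite /f11_part ?linearP ?ev_linearP ?(trilinP3 Ften_trilinear); ring.
Qed.

Lemma cls11_f11_part : cls11 P xi eta (tensor_of f11_part).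
Proof.
have T11 := ev3_tensor_of f11_part_trilinear.
split=> [|x y z].
  apply: Fsym_tensor_of f11_part_trilinear _ _ => x y z; rewrite /f11_part; first ring.
  by rewrite !ev_P P_xi mulmx0 (trilin0_3 Ften_trilinear) ev_xi; ring.
by rewrite /omega !T11 /f11_part ev_xi P_xi mulmx0 (trilin0_3 Ften_trilinear); ring.
Qed.

Lemma vert_form_vert_part x y z : vert_form vert_part x y z =
  vert_form (vsign 1 1) x y z + vert_form (vsign 1 (-1)) x y z
  + vert_form (vsign (-1) (-1)) x y z.
Proof. by rewrite /vert_form !(sum_sign_parts vert_part) !F7_component_eq0; ring. Qed.

(** [cls6] imposes no trace condition, so the [F4]- and [F5]-components of [F] stay
    inside its [F6]-component. *)
Lemma Ften_in_U1 : in_U1 G P xi eta F.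
Proof.
have theta_hS := theta_scalar (tensor_of horiz_part).
exists (tensor_of (f1_form theta_h)), (tensor_of f2_part), zero3, zero3,
  (tensor_of (vert_form (vsign 1 1))), (tensor_of (vert_form (vsign 1 (-1)))),
  (tensor_of (vert_form (vsign (-1) (-1)))), (tensor_of f10_part), (tensor_of f11_part).
split; first exact: (cls1_f1_form theta_hS).
split; first exact: cls2_f2_part.
split; first exact: cls4_zero3.
split; first exact: cls5_zero3.
split; first exact: cls6_vert_part.
split; first exact: cls8_vert_part.
split; first exact: cls9_vert_part.
split; first exact: cls10_f10_part.
split; first exact: cls11_f11_part.
move=> x y z.
have vtri s t := vert_form_trilinear (sign_part_bilinear vert_part_bilinear s t).
rewrite !(ev3_tensor_of (vtri _ _)) (ev3_tensor_of (f1_form_trilinear theta_hS)).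
rewrite (ev3_tensor_of f2_part_trilinear) (ev3_tensor_of f10_part_trilinear).
rewrite (ev3_tensor_of f11_part_trilinear) !ev3_zero3.
by rewrite Ften_decomp vert_form_vert_part /f2_part; ring.
Qed.
End Decomposition.
End PiManifold.

Unset Implicit Arguments.
Set Strict Implicit.

Theorem lemma2p2 (R : realFieldType) (n : nat)
    (G P : 'M[R]_(pdim n)) (xi : 'cV[R]_(pdim n)) (eta : 'rV[R]_(pdim n))
    (Dphi : 'I_(pdim n) -> 'M[R]_(pdim n)) (Dxi : 'M[R]_(pdim n)) :
  (0 < n)%N ->
  Pi_structure G P xi eta ->
  LC_jet G P xi eta Dphi Dxi ->
  (in_U1 G P xi eta (Ften G Dphi) <->
   forall x y : 'cV[R]_(pdim n), Nij G P xi Dphi Dxi (P *m x) (P *m y) = 0).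
Proof.
move=> hn hPi hLC; split=> [U1 x y|hN].
  apply: (ip_nondeg hPi) => z.
  by rewrite (ip_Nij_phi hPi hLC) (nij_form_U1 hPi U1).
apply: (Ften_in_U1 hPi hn hLC) => x y z.
by rewrite -(ip_Nij_phi hPi hLC) hN ip0l.
Qed.
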